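(* Let $m\ge2$ and $0<e_0\le1$. For the problem $P_m, e_{i\le m-1,k}\ge e_0\mid\mid C_{\max}$, the LS-ECT schedule (for any list order) satisfies $\frac{C_{\max}(\text{LS-ECT})}{C^*_{\max}}\le 1+\frac{1}{e_0}$, where $C^*_{\max}$ is the optimal makespan.
   Context: Shared-processing parallel machine scheduling: $m$ identical machines $M_1,\dots,M_m$, $n$ primary jobs available at time $0$ with processing times $p_j>0$, each processed without interruption on one machine, jobs on a machine processed one after another. The time axis of machine $M_i$ is partitioned into consecutive intervals $(0,t_{i,1}],(t_{i,1},t_{i,2}],\dots$ with sharing ratios $e_{i,k}\in(0,1]$; during the $k$-th interval $M_i$ processes primary work at rate $e_{i,k}$. In $P_m, e_{i\le m-1,k}\ge e_0\mid\mid C_{\max}$ all sharing ratios on machines $M_1,\dots,M_{m-1}$ are at least $e_0$, the ratios on $M_m$ are arbitrary in $(0,1]$, and the goal is to minimize the makespan. LS-ECT: given an ordered list of jobs, the jobs are scheduled one by one in list order; each job is appended after the jobs already assigned to some machine, choosing the machine on which it would complete earliest. *)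

From Stdlib Require Import Reals Lra List.
From Coquelicot Require Import Coquelicot.
Open Scope R_scope.

(* Machines are indexed by 0 .. m-1 (machine i here is M_{i+1} in the paper),
   so machine m-1 is M_m, the machine with arbitrary sharing ratios.
   Interval k of machine i is (t i k, t i (k+1)], with sharing ratio e i k. *)

Definition valid_env (m : nat) (e0 : R) (t e : nat -> nat -> R) : Prop :=
  forall i, (i < m)%nat ->
    t i 0%nat = 0 /\
    (forall k, t i k < t i (S k)) /\
    (forall x, exists k, x <= t i k) /\
    (forall k, 0 < e i k <= 1) /\
    ((S i < m)%nat -> forall k, e0 <= e i k).

(* Amount of primary work machine i can process during (0, x], x >= 0:
   the integral of the piecewise-constant rate (a finite sum, since the
   breakpoints are unbounded). *)
Definition work (t e : nat -> nat -> R) (i : nat) (x : R) : R :=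
  Series (fun k => e i k * (Rmin x (t i (S k)) - Rmin x (t i k))).

Definition completes (t e : nat -> nat -> R) (i : nat) (s p C : R) : Prop :=
  s <= C /\ work t e i C - work t e i s = p.

Definition feasible (m : nat) (t e : nat -> nat -> R) (p : list R)
    (a : nat -> nat) (s c : nat -> R) : Prop :=
  (forall j, (j < length p)%nat ->
      (a j < m)%nat /\ 0 <= s j /\ completes t e (a j) (s j) (nth j p 0) (c j)) /\
  (forall j j', (j < length p)%nat -> (j' < length p)%nat -> j <> j' ->
      a j = a j' -> c j <= s j' \/ c j' <= s j).

Definition makespan (n : nat) (c : nat -> R) : R :=
  fold_right Rmax 0 (map c (seq 0 n)).

Definition upd (L : nat -> R) (i : nat) (v : R) : nat -> R :=
  fun k => if Nat.eqb k i then v else L k.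

(* LS-ECT: jobs are taken in list order; L i is the completion time of the
   last job currently on machine i (0 if none).  Each job is appended on a
   machine where it completes earliest (ties broken arbitrarily). *)
Inductive LSECT (m : nat) (t e : nat -> nat -> R) :
    (nat -> R) -> list R -> (nat -> R) -> Prop :=
| LSECT_nil : forall L, LSECT m t e L nil L
| LSECT_cons : forall L p ps i C L',
    (i < m)%nat ->
    completes t e i (L i) p C ->
    (forall i' C', (i' < m)%nat -> completes t e i' (L i') p C' -> C <= C') ->
    LSECT m t e (upd L i C) ps L' ->
    LSECT m t e L (p :: ps) L'.

Definition max_load (m : nat) (L : nat -> R) : R :=
  fold_right Rmax 0 (map L (seq 0 m)).

From Coquelicot Require Import Coquelicot.
From Stdlib Require Import Reals Lra Lia List Classical.
Open Scope R_scope.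

(* Let Cs be the makespan of a feasible schedule.  Rates are at most 1, so every job is
   at most Cs long, and since the jobs on a machine occupy disjoint subintervals of [0, Cs],
   the total work is at most the total capacity sum_i W_i(Cs), where W_i is the cumulative
   work function of M_i.  Along LS-ECT we maintain that all loads L_i are at most
   (1 + 1/e0) Cs and that placed plus unplaced work is at most sum_i W_i(Cs).  When a job
   arrives, either some machine with rates >= e0 has load < Cs, and the job would finish
   there by Cs + p/e0, or all those machines have used up their capacity on [0, Cs], so the
   job fits into the remaining capacity of M_m and would finish there by Cs.  The earliest
   completion time is no later. *)

Fixpoint sumR (f : nat -> R) (n : nat) : R :=
  match n with O => 0 | S n => sumR f n + f n end.

Lemma sumR_ext f g n : (forall j, (j < n)%nat -> f j = g j) -> sumR f n = sumR g n.
Proof.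
  induction n as [|n IH]; intros Hfg; simpl; [reflexivity|].
  rewrite IH, (Hfg n); [reflexivity | lia | intros j Hj; apply Hfg; lia].
Qed.

Lemma sumR_le f g n : (forall j, (j < n)%nat -> f j <= g j) -> sumR f n <= sumR g n.
Proof.
  induction n as [|n IH]; intros Hfg; simpl; [lra|].
  apply Rplus_le_compat; [apply IH; intros j Hj | ]; apply Hfg; lia.
Qed.

Lemma sumR_plus f g n : sumR (fun j => f j + g j) n = sumR f n + sumR g n.
Proof. induction n as [|n IH]; simpl; [lra|]. rewrite IH. ring. Qed.

Lemma sumR_0 n : sumR (fun _ => 0) n = 0.
Proof. induction n as [|n IH]; simpl; [|rewrite IH]; ring. Qed.

Lemma sumR_indicator a v m :
  sumR (fun i => if Nat.eqb a i then v else 0) m = if Nat.ltb a m then v else 0.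
Proof.
  induction m as [|m IH]; simpl; [reflexivity|]. rewrite IH.
  destruct (Nat.eqb_spec a m), (Nat.ltb_spec a m), (Nat.ltb_spec a (S m));
    lia || lra.
Qed.

Lemma sumR_fibers (a : nat -> nat) f m n : (forall j, (j < n)%nat -> (a j < m)%nat) ->
  sumR f n = sumR (fun i => sumR (fun j => if Nat.eqb (a j) i then f j else 0) n) m.
Proof.
  induction n as [|n IH]; intros Ha; simpl.
  - symmetry. apply sumR_0.
  - rewrite sumR_plus, sumR_indicator, <- IH by (intros j Hj; apply Ha; lia).
    destruct (Nat.ltb_spec (a n) m) as [_ | Hn]; [reflexivity|].
    specialize (Ha n). lia.
Qed.

Lemma sumR_upd (g : nat -> R -> R) L i v m : (i < m)%nat ->
  sumR (fun k => g k (upd L i v k)) m = sumR (fun k => g k (L k)) m + (g i v - g i (L i)).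
Proof.
  induction m as [|m IH]; intros Hi; simpl; [lia|]. unfold upd at 2.
  destruct (Nat.eqb_spec m i) as [-> | Hmi].
  - rewrite (sumR_ext _ (fun k => g k (L k))); [ring|].
    intros j Hj. unfold upd. destruct (Nat.eqb_spec j i); [lia | reflexivity].
  - rewrite IH by lia. ring.
Qed.

Lemma sumR_shift f n : sumR f (S n) = f 0%nat + sumR (fun j => f (S j)) n.
Proof. induction n as [|n IH]; cbn [sumR] in *; [ring|]. rewrite IH. ring. Qed.

Lemma fold_Rplus_sumR l : fold_right Rplus 0 l = sumR (fun j => nth j l 0) (length l).
Proof.
  induction l as [|x l IH]; [reflexivity|].
  cbn [fold_right length]. rewrite sumR_shift, IH. reflexivity.
Qed.

Lemma fold_Rplus_nonneg l : Forall (fun x => 0 <= x) l -> 0 <= fold_right Rplus 0 l.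
Proof. induction 1 as [|x l Hx _ IH]; simpl; lra. Qed.

Lemma fold_Rmax_ge0 l : 0 <= fold_right Rmax 0 l.
Proof. induction l as [|x l IH]; simpl; [lra|]. eapply Rle_trans; [exact IH | apply Rmax_r]. Qed.

Lemma fold_Rmax_ge_In x l : In x l -> x <= fold_right Rmax 0 l.
Proof.
  induction l as [|y l IH]; simpl; [tauto|]. intros [-> | Hx]; [apply Rmax_l|].
  eapply Rle_trans; [exact (IH Hx) | apply Rmax_r].
Qed.

Lemma fold_Rmax_lub l b : 0 <= b -> (forall x, In x l -> x <= b) -> fold_right Rmax 0 l <= b.
Proof.
  induction l as [|y l IH]; simpl; intros Hb Hl; [exact Hb|].
  apply Rmax_lub; [apply Hl | apply IH]; auto.
Qed.

Lemma makespan_ge n c j : (j < n)%nat -> c j <= makespan n c.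
Proof. intros Hj. apply fold_Rmax_ge_In, in_map, in_seq. lia. Qed.

Lemma max_load_le m L b : 0 <= b -> (forall i, (i < m)%nat -> L i <= b) -> max_load m L <= b.
Proof.
  intros Hb HL. apply fold_Rmax_lub; [exact Hb|]. intros x Hx.
  apply in_map_iff in Hx as [i [<- Hi]]. apply in_seq in Hi. apply HL. lia.
Qed.

Definition sharing_profile (t e : nat -> nat -> R) (i : nat) : Prop :=
  t i 0%nat = 0 /\ (forall k, t i k < t i (S k)) /\ (forall x, exists k, x <= t i k) /\
  (forall k, 0 < e i k <= 1).

Lemma valid_env_profile m e0 t e i : valid_env m e0 t e -> (i < m)%nat -> sharing_profile t e i.
Proof.
  intros Hv Hi. destruct (Hv i Hi) as [H0 [Hincr [Hunb [He _]]]].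
  repeat split; auto; apply He.
Qed.

Lemma Rmin_continuous b x : continuity_pt (fun y => Rmin y b) x.
Proof.
  intros eps Heps. exists eps. split; [lra|]. intros y [_ Hy]. simpl in *. unfold R_dist in *.
  unfold Rmin; repeat destruct Rle_dec; unfold Rabs in *; repeat destruct Rcase_abs; lra.
Qed.

Definition work_piece (t e : nat -> nat -> R) (i : nat) (x : R) (k : nat) : R :=
  e i k * (Rmin x (t i (S k)) - Rmin x (t i k)).

Lemma partial_work_continuous t e i N : continuity (fun x => sumR (work_piece t e i x) N).
Proof.
  intros x. induction N as [|N IH]; simpl.
  - apply continuity_pt_const. intros ? ?. reflexivity.
  - apply continuity_pt_plus; [exact IH|].
    apply continuity_pt_scal, continuity_pt_minus; apply Rmin_continuous.
Qed.

Section Work.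

Variables (t e : nat -> nat -> R) (i : nat).
Hypothesis profile : sharing_profile t e i.

Let t_0 : t i 0%nat = 0.
Proof. apply profile. Qed.

Let t_incr k : t i k < t i (S k).
Proof. apply profile. Qed.

Let t_unbounded x : exists k, x <= t i k.
Proof. apply profile. Qed.

Let e_bounds k : 0 < e i k <= 1.
Proof. apply profile. Qed.

Lemma t_mono k n : (k <= n)%nat -> t i k <= t i n.
Proof. induction 1 as [|n _ IH]; [lra|]. specialize (t_incr n). lra. Qed.

(* Beyond the breakpoint [t i N] every further piece vanishes, so the series is a finite sum. *)
Lemma work_partial_sum N x : x <= t i N -> work t e i x = sumR (work_piece t e i x) N.
Proof.
  intros HxN. change (work t e i x) with (Series (work_piece t e i x)). unfold Series.
  rewrite (Lim_seq_ext_loc _ (fun _ => sumR (work_piece t e i x) N)), Lim_seq_const; [reflexivity|].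
  exists N. intros n Hn.
  assert (Htail : forall d, sumR (work_piece t e i x) (N + d) = sumR (work_piece t e i x) N).
  { induction d as [|d IH]; [now rewrite Nat.add_0_r|].
    rewrite Nat.add_succ_r. simpl. rewrite IH. unfold work_piece.
    assert (t i N <= t i (N + d)) by (apply t_mono; lia).
    specialize (t_incr (N + d)).
    rewrite !Rmin_left by lra. ring. }
  transitivity (sumR (work_piece t e i x) (S n)).
  - clear. induction n as [|n IH]; [rewrite sum_O; simpl; ring|]. rewrite sum_Sn, IH. reflexivity.
  - replace (S n) with (N + (S n - N))%nat by lia. apply Htail.
Qed.

(* [overlap] is the length of [x, y] ∩ [t i 0, t i N]. *)
Lemma partial_work_increment_bounds lo N x y :
  x <= y -> 0 <= lo -> (forall k, lo <= e i k) ->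
  let overlap := (Rmin y (t i N) - Rmin x (t i N)) - (Rmin y (t i 0%nat) - Rmin x (t i 0%nat)) in
  lo * overlap <= sumR (work_piece t e i y) N - sumR (work_piece t e i x) N <= overlap.
Proof.
  intros Hxy Hlo Hle. induction N as [|N IH]; simpl in *; [lra|].
  set (d := (Rmin y (t i (S N)) - Rmin y (t i N)) - (Rmin x (t i (S N)) - Rmin x (t i N))).
  assert (Hpiece : work_piece t e i y N - work_piece t e i x N = e i N * d)
    by (unfold work_piece, d; ring).
  assert (Hd : 0 <= d).
  { specialize (t_incr N). unfold d, Rmin. repeat destruct Rle_dec; lra. }
  assert (lo * d <= e i N * d) by (apply Rmult_le_compat_r; [lra | apply Hle]).
  assert (e i N * d <= d) by (specialize (e_bounds N); nra).
  unfold d in *. lra.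
Qed.

Lemma work_mono x y : x <= y -> work t e i x <= work t e i y.
Proof.
  intros Hxy. destruct (t_unbounded y) as [N HN].
  rewrite !(work_partial_sum N) by lra.
  assert (Hb := partial_work_increment_bounds 0 N x y Hxy (Rle_refl 0)
                  (fun k => Rlt_le _ _ (proj1 (e_bounds k)))).
  simpl in Hb. lra.
Qed.

Lemma work_increment_bounds lo x y : 0 <= x <= y -> 0 <= lo -> (forall k, lo <= e i k) ->
  lo * (y - x) <= work t e i y - work t e i x <= y - x.
Proof.
  intros Hxy Hlo Hle. destruct (t_unbounded y) as [N HN].
  rewrite !(work_partial_sum N) by lra.
  assert (Hb := partial_work_increment_bounds lo N x y (proj2 Hxy) Hlo Hle). simpl in Hb.
  replace (Rmin y (t i N) - Rmin x (t i N) - (Rmin y (t i 0%nat) - Rmin x (t i 0%nat)))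
    with (y - x) in Hb by (rewrite t_0; unfold Rmin; repeat destruct Rle_dec; lra).
  exact Hb.
Qed.

Lemma completes_work_le_duration s p C : 0 <= s -> completes t e i s p C -> p <= C - s.
Proof.
  intros Hs [HsC Hp]. rewrite <- Hp.
  apply (work_increment_bounds 0); [lra | lra | intros k; apply Rlt_le, e_bounds].
Qed.

Lemma work_ivt x y w : x <= y -> work t e i x <= w <= work t e i y ->
  exists z, x <= z <= y /\ work t e i z = w.
Proof.
  intros Hxy Hw. destruct (t_unbounded y) as [N HN].
  rewrite !(work_partial_sum N) in Hw by lra.
  assert (Hcont : continuity (fun z => sumR (work_piece t e i z) N - w)).
  { intros z. apply continuity_pt_minus; [apply partial_work_continuous|].
    apply continuity_pt_const. intros ? ?. reflexivity. }
  destruct (IVT_cor _ x y Hcont Hxy) as [z [Hz Hz0]]; [nra|].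
  exists z. split; [exact Hz|]. rewrite (work_partial_sum N) by lra. lra.
Qed.

Lemma completes_before x y p : x <= y -> 0 <= p -> work t e i x + p <= work t e i y ->
  exists C, C <= y /\ completes t e i x p C.
Proof.
  intros Hxy Hp Hw.
  destruct (work_ivt x y (work t e i x + p)) as [C [HC HwC]]; [exact Hxy | lra |].
  exists C. split; [lra|]. split; lra.
Qed.

Lemma completes_within_rate lo x p : 0 < lo -> (forall k, lo <= e i k) -> 0 <= x -> 0 <= p ->
  exists C, C <= x + p / lo /\ completes t e i x p C.
Proof.
  intros Hlo Hle Hx Hp.
  assert (Hq : 0 <= p / lo) by (apply Rdiv_le_0_compat; lra).
  apply completes_before; [lra | exact Hp |].
  assert (Hb := work_increment_bounds lo x (x + p / lo) ltac:(lra) ltac:(lra) Hle).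
  replace (lo * (x + p / lo - x)) with p in Hb by (field; lra). lra.
Qed.

End Work.

(* Remove the last interval [s n, c n]; the others lie entirely before or entirely after it. *)
Lemma sum_increments_disjoint (F : R -> R) (s c : nat -> R) :
  (forall u v, u <= v -> F u <= F v) ->
  forall n (P : nat -> bool) x y, x <= y ->
  (forall j, (j < n)%nat -> P j = true -> x <= s j /\ s j <= c j /\ c j <= y) ->
  (forall j j', (j < n)%nat -> (j' < n)%nat -> j <> j' -> P j = true -> P j' = true ->
     c j <= s j' \/ c j' <= s j) ->
  sumR (fun j => if P j then F (c j) - F (s j) else 0) n <= F y - F x.
Proof.
  intros Hmono n. induction n as [|n IH]; intros P x y Hxy Hin Hdisj; simpl.
  { assert (F x <= F y) by (apply Hmono; exact Hxy). lra. }
  destruct (P n) eqn:Pn.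
  2: { rewrite Rplus_0_r. apply IH; [exact Hxy | |]; intros; [apply Hin | apply Hdisj]; auto; lia. }
  destruct (Hin n ltac:(lia) Pn) as [Hxs [Hsc Hcy]].
  set (before j := if Rle_dec (c j) (s n) then P j else false).
  set (after j := if Rle_dec (c j) (s n) then false else P j).
  rewrite (sumR_ext _ (fun j => (if before j then F (c j) - F (s j) else 0) +
                                (if after j then F (c j) - F (s j) else 0))).
  2: { intros j _. unfold before, after. destruct Rle_dec, (P j); ring. }
  rewrite sumR_plus.
  assert (Hb : sumR (fun j => if before j then F (c j) - F (s j) else 0) n <= F (s n) - F x).
  { apply IH; [exact Hxs | |].
    - intros j Hj. unfold before. destruct Rle_dec; [|discriminate].
      intros Pj. destruct (Hin j ltac:(lia) Pj) as [? [? ?]]. lra.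
    - intros j j' Hj Hj' Hne. unfold before.
      do 2 destruct Rle_dec; try discriminate. apply Hdisj; lia. }
  assert (Ha : sumR (fun j => if after j then F (c j) - F (s j) else 0) n <= F y - F (c n)).
  { apply IH; [exact Hcy | |].
    - intros j Hj. unfold after. destruct Rle_dec; [discriminate|].
      intros Pj. destruct (Hin j ltac:(lia) Pj) as [? [? ?]].
      destruct (Hdisj j n ltac:(lia) ltac:(lia) ltac:(lia) Pj Pn); lra.
    - intros j j' Hj Hj' Hne. unfold after.
      do 2 destruct Rle_dec; try discriminate. apply Hdisj; lia. }
  lra.
Qed.

Section OptimalSchedule.

Variables (m : nat) (e0 : R) (t e : nat -> nat -> R) (p : list R) (a : nat -> nat) (s c : nat -> R).
Hypothesis env : valid_env m e0 t e.
Hypothesis sched : feasible m t e p a s c.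

Lemma feasible_jobs_le Cs : (forall j, (j < length p)%nat -> c j <= Cs) ->
  Forall (fun x => x <= Cs) p.
Proof.
  intros Hc. apply Forall_nth. intros j d Hj. rewrite nth_indep with (d' := 0) by exact Hj.
  destruct (proj1 sched j Hj) as [Ha [Hs Hcomp]].
  assert (Hle := completes_work_le_duration t e (a j) (valid_env_profile m e0 t e (a j) env Ha)
                   _ _ _ Hs Hcomp).
  specialize (Hc j Hj). lra.
Qed.

(* Jobs on machine i occupy disjoint subintervals of [0, Cs]. *)
Lemma feasible_total_work Cs : 0 <= Cs -> (forall j, (j < length p)%nat -> c j <= Cs) ->
  sumR (fun i => work t e i 0) m + fold_right Rplus 0 p <= sumR (fun i => work t e i Cs) m.
Proof.
  intros HCs Hc. destruct sched as [Hjob Hdisj].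
  rewrite fold_Rplus_sumR, (sumR_fibers a _ m (length p)) by (intros j Hj; apply Hjob, Hj).
  rewrite <- sumR_plus. apply sumR_le. intros i Hi.
  assert (Hmono := work_mono t e i (valid_env_profile m e0 t e i env Hi)).
  rewrite (sumR_ext _
    (fun j => if Nat.eqb (a j) i then work t e i (c j) - work t e i (s j) else 0)).
  2: { intros j Hj. destruct (Nat.eqb_spec (a j) i) as [<- |]; [|reflexivity].
       symmetry. apply (Hjob j Hj). }
  enough (sumR (fun j => if Nat.eqb (a j) i then work t e i (c j) - work t e i (s j) else 0)
            (length p) <= work t e i Cs - work t e i 0) by lra.
  apply sum_increments_disjoint; [exact Hmono | exact HCs | |].
  - intros j Hj Haj. destruct (Hjob j Hj) as [_ [Hs [HsC _]]]. specialize (Hc j Hj). lra.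
  - intros j j' Hj Hj' Hne Haj Haj'. apply Hdisj; auto.
    apply Nat.eqb_eq in Haj, Haj'. congruence.
Qed.

End OptimalSchedule.

Section ListScheduling.

Variables (m : nat) (e0 : R) (t e : nat -> nat -> R) (Cs : R).
Hypothesis e0_pos : 0 < e0.
Hypothesis env : valid_env m e0 t e.

Lemma completion_on_fast_machine L p i : (S i < m)%nat -> 0 <= L i <= Cs -> 0 <= p <= Cs ->
  exists C, C <= (1 + 1 / e0) * Cs /\ completes t e i (L i) p C.
Proof.
  intros Hi HL Hp.
  assert (Hfast : forall k, e0 <= e i k) by (apply (env i); lia).
  destruct (completes_within_rate t e i (valid_env_profile m e0 t e i env ltac:(lia))
              e0 (L i) p e0_pos Hfast ltac:(lra) ltac:(lra)) as [C [HC Hcomp]].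
  exists C. split; [|exact Hcomp].
  assert (p / e0 <= Cs / e0) by (apply Rmult_le_compat_r; [apply Rlt_le, Rinv_0_lt_compat |]; lra).
  replace ((1 + 1 / e0) * Cs) with (Cs + Cs / e0) by (field; lra). lra.
Qed.

Lemma completion_on_last_machine L p : (0 < m)%nat ->
  (forall i, (S i < m)%nat -> Cs <= L i) -> 0 <= L (m - 1)%nat -> 0 < p ->
  sumR (fun i => work t e i (L i)) m + p <= sumR (fun i => work t e i Cs) m ->
  exists C, C <= Cs /\ completes t e (m - 1) (L (m - 1)%nat) p C.
Proof.
  intros Hm Hbusy HL Hp Hcap. destruct m as [|k]; [lia|].
  replace (S k - 1)%nat with k in * by lia. simpl in Hcap.
  assert (Hprof := valid_env_profile (S k) e0 t e k env ltac:(lia)).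
  assert (sumR (fun i => work t e i Cs) k <= sumR (fun i => work t e i (L i)) k).
  { apply sumR_le. intros j Hj.
    apply (work_mono t e j (valid_env_profile (S k) e0 t e j env ltac:(lia))), Hbusy. lia. }
  assert (HLC : L k <= Cs).
  { destruct (Rle_lt_dec (L k) Cs) as [|Hgt]; [assumption|].
    assert (work t e k Cs <= work t e k (L k)) by (apply work_mono; [exact Hprof | lra]). lra. }
  apply completes_before; [exact Hprof | exact HLC | lra | lra].
Qed.

Lemma exists_completion_within_bound L p : (0 < m)%nat -> (forall i, (i < m)%nat -> 0 <= L i) ->
  0 < p <= Cs ->
  sumR (fun i => work t e i (L i)) m + p <= sumR (fun i => work t e i Cs) m ->
  exists i C, (i < m)%nat /\ C <= (1 + 1 / e0) * Cs /\ completes t e i (L i) p C.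
Proof.
  intros Hm HL Hp Hcap.
  destruct (classic (exists i, (S i < m)%nat /\ L i < Cs)) as [[i [Hi HLi]] | Hbusy].
  - destruct (completion_on_fast_machine L p i Hi) as [C HC];
      [split; [apply HL; lia | lra] | lra |].
    exists i, C. split; [lia | exact HC].
  - destruct (completion_on_last_machine L p Hm) as [C [HC Hcomp]];
      [| apply HL; lia | lra | exact Hcap |].
    + intros i Hi. apply Rnot_lt_le. intros HLi. apply Hbusy. exists i. split; assumption.
    + exists (m - 1)%nat, C. split; [lia | split; [| exact Hcomp]].
      assert (0 <= 1 / e0 * Cs) by (apply Rmult_le_pos; [apply Rlt_le, Rdiv_lt_0_compat |]; lra).
      lra.
Qed.

Lemma lsect_loads_bounded L ps L' : LSECT m t e L ps L' ->
  (forall i, (i < m)%nat -> 0 <= L i <= (1 + 1 / e0) * Cs) ->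
  Forall (fun x => 0 < x <= Cs) ps ->
  sumR (fun i => work t e i (L i)) m + fold_right Rplus 0 ps <= sumR (fun i => work t e i Cs) m ->
  forall i, (i < m)%nat -> 0 <= L' i <= (1 + 1 / e0) * Cs.
Proof.
  induction 1 as [L | L p ps i C L' Hi [HLC Hwork] Hect _ IH]; intros HL Hps Hcap; [exact HL|].
  apply Forall_cons_iff in Hps as [Hp Hps']. simpl in Hcap.
  assert (Hrest := fold_Rplus_nonneg ps (Forall_impl _ (fun x Hx => Rlt_le _ _ (proj1 Hx)) Hps')).
  destruct (exists_completion_within_bound L p ltac:(lia) (fun i Hi => proj1 (HL i Hi)) Hp
              ltac:(lra)) as [i' [C' [Hi' [HC' Hcomp']]]].
  assert (C <= C') by exact (Hect i' C' Hi' Hcomp').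
  apply IH; [| exact Hps' |].
  - intros j Hj. unfold upd. destruct (Nat.eqb j i); [specialize (HL i Hi); lra | exact (HL j Hj)].
  - rewrite (sumR_upd (fun k x => work t e k x) L i C m Hi). lra.
Qed.

End ListScheduling.

Theorem theorem4 (m : nat) (e0 : R) (t e : nat -> nat -> R) (p : list R) :
  (2 <= m)%nat -> 0 < e0 <= 1 -> valid_env m e0 t e ->
  Forall (fun x => 0 < x) p ->
  forall Lf : nat -> R, LSECT m t e (fun _ => 0) p Lf ->
  forall (a : nat -> nat) (s c : nat -> R), feasible m t e p a s c ->
  max_load m Lf <= (1 + 1 / e0) * makespan (length p) c.
Proof.
  intros _ He0 Hv Hp Lf Hls a s c Hsched.
  set (Cs := makespan (length p) c).
  assert (HCs : 0 <= Cs) by apply fold_Rmax_ge0.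
  assert (Hc : forall j, (j < length p)%nat -> c j <= Cs) by (intros j; apply makespan_ge).
  assert (HB : 0 <= (1 + 1 / e0) * Cs).
  { assert (0 < 1 / e0) by (apply Rdiv_lt_0_compat; lra). apply Rmult_le_pos; lra. }
  apply max_load_le; [exact HB|]. intros i Hi.
  refine (proj2 (lsect_loads_bounded m e0 t e Cs (proj1 He0) Hv _ _ _ Hls _ _ _ i Hi)).
  - intros; lra.
  - exact (Forall_and Hp (feasible_jobs_le m e0 t e p a s c Hv Hsched Cs Hc)).
  - exact (feasible_total_work m e0 t e p a s c Hv Hsched Cs HCs Hc).
Qed.
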